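(* Let $n\ge 1$ be an integer, $X\sim \mathrm{Bino}(n,p)$ with $p\in[0,1]$, and fix $\alpha\in[0,1]$. Let $T_p:\{0,1,\dots,n\}\times[0,1]\to\mathbb{R}$ be a test statistic satisfying $$T_p(x,p_0)=T_p(n-x,1-p_0)\quad\text{for all } x\in\{0,\dots,n\},\ p_0\in[0,1].$$ Define $$h_p(x,p_0)=\sum_{\{y\in\{0,\dots,n\}:\,T_p(y,p_0)\le T_p(x,p_0)\}} p_B(y,n,p_0),$$ and $C_p(x)=\overline{\{p_0\in[0,1]: h_p(x,p_0)>\alpha\}}$, written $C_p(x)=[L_p(x),U_p(x)]$. Then $$U_p(x)=1-L_p(n-x)\quad\text{for all } x\in\{0,\dots,n\}.$$
   Context: $p_B(y,n,p)=\binom{n}{y}p^y(1-p)^{n-y}$ denotes the binomial probability mass function. For a set $A\subseteq\mathbb{R}$, $\overline{A}$ denotes the smallest closed simply connected set (i.e. closed interval) containing $A$. A small value of $T_p(x,p_0)$ is regarded as evidence against $H_0:p=p_0$; $C_p$ is the resulting confidence interval for $p$ of nominal level $1-\alpha$. *)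

From HB Require Import structures.
From mathcomp Require Import all_boot all_order all_algebra.
From mathcomp Require Import all_classical all_reals.
Set Implicit Arguments. Unset Strict Implicit. Unset Printing Implicit Defensive.
Import Order.TTheory GRing.Theory Num.Theory.
Local Open Scope ring_scope.
Local Open Scope classical_set_scope.

Definition pB {R : realType} (y n : nat) (p : R) : R :=
  ('C(n, y))%:R * p ^+ y * (1 - p) ^+ (n - y).

Definition hp {R : realType} (n : nat) (T : nat -> R -> R) (x : nat) (p0 : R) : R :=
  \sum_(y < n.+1 | T y p0 <= T x p0) pB y n p0.

(* smallest closed interval containing A: intersection of all closed
   intervals [a,b] (possibly empty, a > b) containing A *)
Definition interval_hull {R : realType} (A : set R) : set R :=
  [set t | forall a b : R, A `<=` `[a, b] -> `[a, b] t].

Definition Cp {R : realType} (n : nat) (T : nat -> R -> R) (alpha : R) (x : nat)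
  : set R :=
  interval_hull [set p0 | 0 <= p0 <= 1 /\ hp n T x p0 > alpha].

From HB Require Import structures.
From mathcomp Require Import all_boot all_order all_algebra.
From mathcomp Require Import all_classical all_reals.
From mathcomp Require Import lra.
Import Order.TTheory GRing.Theory Num.Theory.
Local Open Scope ring_scope.
Local Open Scope classical_set_scope.

(* The reflection y |-> n - y, p0 |-> 1 - p0 preserves the binomial pmf and,
   by the symmetry of T, the ordering of the statistic, so h(n - x, 1 - p0) =
   h(x, p0).  Hence the acceptance set of n - x is the mirror image under
   t |-> 1 - t of that of x; taking interval hulls commutes with this mirror,
   so C(n - x) = 1 - C(x) and the upper end of C(x) is 1 minus the lower end
   of C(n - x). *)

Lemma itvccP {R : realType} (a b t : R) : `[a, b] t <-> a <= t <= b.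
Proof. by rewrite /= in_itv. Qed.

Lemma interval_hull_reflect {R : realType} (A : set R) (t : R) :
  interval_hull [set s | A (1 - s)] t <-> interval_hull A (1 - t).
Proof.
split=> hull a b sub_ab; apply/itvccP.
- have /itvccP : `[1 - b, 1 - a] t.
    by apply: hull => s /sub_ab /itvccP ?; apply/itvccP; lra.
  by move=> ?; lra.
- have /itvccP : `[1 - b, 1 - a] (1 - t).
    apply: hull => s As; apply/itvccP.
    have /sub_ab /itvccP : A (1 - (1 - s)) by rewrite subKr.
    by move=> ?; lra.
  by move=> ?; lra.
Qed.

Lemma pB_reflect {R : realType} (n y : nat) (p0 : R) :
  (y <= n)%N -> pB (n - y)%N n (1 - p0) = pB y n p0.
Proof.
by move=> le_yn; rewrite /pB bin_sub // subKn // subKr mulrAC.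
Qed.

Section Reflection.

Context {R : realType} {n : nat} {T : nat -> R -> R}.
Hypothesis T_reflect : forall (x : nat) (p0 : R), (x <= n)%N -> 0 <= p0 <= 1 ->
  T x p0 = T (n - x)%N (1 - p0).

Lemma hp_reflect (x : nat) (p0 : R) :
  (x <= n)%N -> 0 <= p0 <= 1 -> hp n T (n - x)%N (1 - p0) = hp n T x p0.
Proof.
move=> le_xn p0_01; rewrite /hp (reindex_inj rev_ord_inj) /=.
apply: eq_big => [y | y _]; have le_yn : (y <= n)%N by rewrite -ltnS.
- by rewrite subSS -(T_reflect _ _ le_yn p0_01) -(T_reflect _ _ le_xn p0_01).
- by rewrite subSS pB_reflect.
Qed.

Lemma Cp_reflect (alpha : R) (x : nat) (t : R) : (x <= n)%N ->
  Cp n T alpha (n - x)%N t <-> Cp n T alpha x (1 - t).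
Proof.
move=> le_xn; rewrite /Cp -interval_hull_reflect.
suff -> : [set p0 | 0 <= p0 <= 1 /\ alpha < hp n T (n - x)%N p0] =
  [set s | 0 <= 1 - s <= 1 /\ alpha < hp n T x (1 - s)] by [].
apply/seteqP; split=> s /= [s_01 h_gt]; split; try lra.
- by rewrite -(subKn le_xn) hp_reflect ?leq_subr.
- have {}s_01 : 0 <= s <= 1 by lra.
  by rewrite -(subKn le_xn) hp_reflect ?leq_subr in h_gt.
Qed.

End Reflection.

Lemma itvcc_reflect_ub {R : realType} {L1 U1 L2 U2 : R} :
  L1 <= U1 -> (forall t, `[L2, U2] t <-> `[L1, U1] (1 - t)) -> U1 = 1 - L2.
Proof.
move=> le_LU mirror.
have /itvccP lb_U1 : `[L2, U2] (1 - U1).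
  by apply/mirror/itvccP; rewrite subKr; lra.
have /itvccP ub_L2 : `[L1, U1] (1 - L2).
  by apply/mirror/itvccP; lra.
lra.
Qed.

Theorem proposition1 (R : realType) (n : nat) (p alpha : R)
  (T : nat -> R -> R)
  (hn : (1 <= n)%N) (hp01 : 0 <= p <= 1) (halpha : 0 <= alpha <= 1)
  (hT : forall (x : nat) (p0 : R), (x <= n)%N -> 0 <= p0 <= 1 ->
          T x p0 = T (n - x)%N (1 - p0)) :
  forall (x : nat), (x <= n)%N ->
  forall L1 U1 L2 U2 : R,
    L1 <= U1 -> Cp n T alpha x = `[L1, U1] ->
    Cp n T alpha (n - x)%N = `[L2, U2] ->
    U1 = 1 - L2.
Proof.
move=> x le_xn L1 U1 L2 U2 le_LU C1 C2.
apply: (itvcc_reflect_ub (U2 := U2) le_LU) => t.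
rewrite -C1 -C2; exact: Cp_reflect.
Qed.
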